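(* Let $N\ge 2$, $h\ge 1$, $\Lambda\ge 1$ be integers, and let $f(X)\in\mathbb{F}_2[X]$ be a nonzero polynomial of degree at most $N h\Lambda\lceil\log N\rceil$ (logarithms base $2$). Consider the following procedure: for $i=1,2,\dots,\lceil\log N\rceil$ in order, compute $r_i(X)=f(X)\bmod (X^{2^i}+X)$, stopping at the first index $j$ for which $r_j(X)\neq 0$ (assume such $j\le\lceil\log N\rceil$ exists); then, with $\tilde f(X)=f(X)\bmod(X^{2^j}+X)$, divide $\tilde f(X)$ by the irreducible polynomials of degree $j$ over $\mathbb{F}_2$ until one is found that is coprime with $\tilde f(X)$ (equivalently with $f(X)$), and output it. The total complexity (number of field operations) of this procedure is at most $O(N^2)+O\big(hN(\log N)^2\Lambda\big)$.
   Context: All polynomials are over $\mathbb{F}_2$. Division of two polynomials, one of degree $w$, is assumed to cost $O(w\log w)$ operations. For each $i$, $X^{2^i}+X$ is the product of all irreducible binary polynomials whose degree divides $i$. *)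

From HB Require Import structures.
From mathcomp Require Import all_boot all_order all_algebra.
Set Implicit Arguments. Unset Strict Implicit. Unset Printing Implicit Defensive.
Import GRing.Theory.
Local Open Scope ring_scope.

Notation F2 := 'F_2.

Definition weight (q : {poly F2}) : nat := count (fun c => c != 0) q.

(* Schoolbook long division of p by q, returning (remainder, cost).
   Each elimination step  p <- p - (lc p / lc q) X^k q  costs
   weight q field operations (one per nonzero coefficient of q).
   With fuel >= size p the remainder is exactly p %% q. *)
Fixpoint sdiv (fuel : nat) (p q : {poly F2}) : {poly F2} * nat :=
  match fuel with
  | 0 => (p, 0%N)
  | n.+1 =>
      if (size p < size q)%N then (p, 0%N)
      else let: (r, c) :=
             sdiv n (p - (lead_coef p / lead_coef q) *: ('X^(size p - size q) * q)) q
           in (r, (c + weight q)%N)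
  end.

Definition modc (p q : {poly F2}) : {poly F2} * nat := sdiv (size p) p q.

Definition binom2 (i : nat) : {poly F2} := 'X^(2 ^ i)%N + 'X.

Fixpoint phase1 (f : {poly F2}) (i fuel : nat) : option (nat * {poly F2}) * nat :=
  match fuel with
  | 0 => (None, 0%N)
  | n.+1 =>
      let: (r, c) := modc f (binom2 i) in
      if r != 0 then (Some (i, r), c)
      else let: (o, c') := phase1 f i.+1 n in (o, (c + c')%N)
  end.

(* Phase 2: divide ft by the polynomials of s in order, stopping at the
   first g with nonzero remainder (i.e. coprime with ft, g irreducible). *)
Fixpoint phase2 (ft : {poly F2}) (s : seq {poly F2}) : option {poly F2} * nat :=
  match s with
  | [::] => (None, 0%N)
  | g :: s' =>
      let: (r, c) := modc ft g in
      if r != 0 then (Some g, c)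
      else let: (o, c') := phase2 ft s' in (o, (c + c')%N)
  end.

(* The whole procedure, for L = ceil(log2 N) and an enumeration
   irr j of the irreducible polynomials of degree j. Returns (output, cost). *)
Definition procedure (L : nat) (f : {poly F2}) (irr : nat -> seq {poly F2})
  : option {poly F2} * nat :=
  let: (o, c1) := phase1 f 1 L in
  match o with
  | None => (None, c1)
  | Some (j, ft) => let: (o2, c2) := phase2 ft (irr j) in (o2, (c1 + c2)%N)
  end.

From HB Require Import structures.
From mathcomp Require Import all_boot all_order all_algebra.
From mathcomp Require Import zify.

Set Implicit Arguments.
Unset Strict Implicit.
Unset Printing Implicit Defensive.
Import GRing.Theory.
Local Open Scope ring_scope.

(* Schoolbook division of p by q takes at most size p elimination steps, each
   costing weight q.  Phase 1 divides f by at most ceil(log N) binomials of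
   weight 2, which costs O(log N * deg f) = O(h N (log N)^2 Lam).  The remainder
   passed to phase 2 has size at most 2^j <= 2N; a trial division by an
   irreducible g of degree j costs at most 2^j (j + 1), and every failed trial
   exhibits a new irreducible factor of degree j of the remainder, of which
   there are fewer than 2^j / j.  Hence phase 2 costs O(4^j) = O(N^2). *)

Section LongDivisionStep.
Context {F : fieldType}.
Implicit Types p q : {poly F}.

Definition lead_elim p q : {poly F} :=
  p - (lead_coef p / lead_coef q) *: ('X^(size p - size q) * q).

Lemma size_lead_elim p q :
  q != 0 -> (size q <= size p)%N -> (size (lead_elim p q) < size p)%N.
Proof.
move=> q0 le_qp.
have p0 : p != 0 by rewrite -size_poly_gt0 (leq_trans _ le_qp) ?size_poly_gt0.
rewrite /lead_elim; set m := _ *: _.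
have size_m : size m = size p.
  by rewrite size_scale ?mulf_neq0 ?invr_eq0 ?lead_coef_eq0 // mulrC size_mulXn ?subnK.
have lead_m : lead_coef m = lead_coef p.
  by rewrite lead_coefZ lead_coefM lead_coefXn mul1r divfK ?lead_coef_eq0.
rewrite [X in (_ < X)%N](polySpred p0) ltnS; apply/leq_sizeP => k le_k.
rewrite coefB; case: (ltngtP k (size p).-1) => [|lt_k|->].
- by rewrite ltnNge le_k.
- by rewrite !nth_default ?size_m ?subrr // (polySpred p0).
- by rewrite -[p`__]/(lead_coef p) -lead_m lead_coefE size_m subrr.
Qed.

Lemma dvdp_sub_lead_elim p q : q %| p - lead_elim p q.
Proof. by rewrite /lead_elim opprB addrC subrK scalerAl dvdp_mull. Qed.

End LongDivisionStep.

Section IrreducibleDivisors.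
Context {F : fieldType}.
Implicit Types p q : {poly F}.

Lemma coprimep_monic_irredp p q : p \is monic -> q \is monic ->
  irreducible_poly p -> irreducible_poly q -> p != q -> coprimep p q.
Proof.
move=> mon_p mon_q irr_p irr_q; rewrite irreducible_poly_coprime //.
apply: contra => dvd_pq; rewrite -eqp_monic // irr_q // gtn_eqF //; exact: irr_p.1.
Qed.

(* Distinct monic irreducible divisors of degree j are pairwise coprime, so
   their product divides p. *)
Lemma size_irredp_divisors p (s : seq {poly F}) j : p != 0 -> uniq s ->
  (forall q, q \in s -> [/\ q \is monic, irreducible_poly q, size q = j.+1 & q %| p]) ->
  (size s * j <= (size p).-1)%N.
Proof.
elim: s p => [|q s IHs] //= p p0 /andP[q_s uniq_s] s_div.
have [mon_q irr_q size_q dvd_qp] := s_div q (mem_head _ _).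
have [p' def_p] : exists p' : {poly F}, p = p' * q by apply/dvdpP.
have p'0 : p' != 0 by apply: contraNneq p0 => p'0; rewrite def_p p'0 mul0r.
have le_s : (size s * j <= (size p').-1)%N.
  apply: IHs => // q' s_q'.
  have [mon_q' irr_q' size_q' dvd_q'p] := s_div q' (mem_behead (s := q :: s) s_q').
  have cop : coprimep q' q.
    by apply: coprimep_monic_irredp => //; apply: contraNneq q_s => <-.
  by split=> //; rewrite -(Gauss_dvdpl _ cop) -def_p.
rewrite def_p size_mul ?(irredp_neq0 irr_q) // size_q (polySpred p'0) addSn addnS /=.
by rewrite mulSn addnC leq_add2r.
Qed.

End IrreducibleDivisors.

Implicit Types p q f g ft : {poly F2}.
Implicit Type s : seq {poly F2}.

Lemma sdiv_cost n p q : ((sdiv n p q).2 <= n * weight q)%N.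
Proof.
elim: n p => [|n IHn] p //=; case: ifP => // _.
rewrite -/(lead_elim p q); have := IHn (lead_elim p q).
by case: sdiv => r c /= le_c; rewrite mulSn addnC leq_add2l.
Qed.

Lemma sdiv_dvd n p q : q %| p - (sdiv n p q).1.
Proof.
elim: n p => [|n IHn] p /=; first by rewrite subrr dvdp0.
case: ifP => _; first by rewrite subrr dvdp0.
rewrite -/(lead_elim p q); have := IHn (lead_elim p q).
case: sdiv => r c /= dvd_r.
by rewrite -(subrK (lead_elim p q) p) -addrA dvdp_add ?dvdp_sub_lead_elim.
Qed.

Lemma size_sdiv n p q : q != 0 -> (size p < n + size q)%N ->
  (size (sdiv n p q).1 < size q)%N.
Proof.
move=> q0; elim: n p => [|n IHn] p //=.
case: ifPn => //; rewrite -leqNgt => le_qp lt_p.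
rewrite -/(lead_elim p q); have := IHn (lead_elim p q).
case: sdiv => r c /=; apply.
by rewrite -ltnS -addSn (leq_trans _ lt_p) // ltnS size_lead_elim.
Qed.

Lemma modc_cost p q : ((modc p q).2 <= size p * weight q)%N.
Proof. exact: sdiv_cost. Qed.

Lemma modc_eq0_dvdp p q : (modc p q).1 = 0 -> q %| p.
Proof. by move=> r0; have := sdiv_dvd (size p) p q; rewrite -/(modc p q) r0 subr0. Qed.

Lemma size_modc p q : q != 0 -> (size (modc p q).1 < size q)%N.
Proof. by move=> q0; rewrite size_sdiv // -addn1 leq_add2l size_poly_gt0. Qed.

Lemma weight_le_size p : (weight p <= size p)%N.
Proof. exact: count_size. Qed.

Lemma weight_iota p : weight p = count (fun k => p`_k != 0) (iota 0 (size p)).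
Proof. by rewrite /weight -[in LHS](mkseq_nth 0 p) count_map. Qed.

Lemma weight_binom2 i : (weight (binom2 i) <= 2)%N.
Proof.
rewrite weight_iota (@leq_trans (count (pred1 1%N) (iota 0 (size (binom2 i)))
                                + count (pred1 (2 ^ i)%N) (iota 0 (size (binom2 i)))))%N //.
  rewrite -count_predUI (leq_trans _ (leq_addr _ _)) // sub_count // => k.
  rewrite /binom2 coefD coefXn coefX /=.
  by case: (k == 1)%N; case: (k == 2 ^ i)%N; rewrite ?addr0 ?eqxx.
by rewrite -[2%N]/(1 + 1)%N leq_add // count_uniq_mem ?iota_uniq ?leq_b1.
Qed.

Lemma binom2_neq0 i : (0 < i)%N -> binom2 i != 0.
Proof.
move=> i_gt0; apply/eqP => /(congr1 (fun p => p`_(2 ^ i))).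
rewrite coef0 /binom2 coefD coefXn coefX eqxx.
suff /negPf -> : (2 ^ i != 1)%N by rewrite addr0 => /eqP; rewrite oner_eq0.
by rewrite -(expn0 2) eqn_exp2l // -lt0n.
Qed.

Lemma size_binom2 i : (size (binom2 i) <= (2 ^ i).+1)%N.
Proof.
rewrite (leq_trans (size_add _ _)) // size_polyXn size_polyX geq_max leqnn.
by rewrite ltnS expn_gt0.
Qed.

Lemma phase1_cost f i n : ((phase1 f i n).2 <= n * (2 * size f))%N.
Proof.
elim: n i => [|n IHn] i //=.
have le_c : ((modc f (binom2 i)).2 <= 2 * size f)%N.
  by rewrite (leq_trans (modc_cost _ _)) // mulnC leq_mul2r weight_binom2 orbT.
case: modc le_c => r c /= le_c; case: ifP => _ /=; first by rewrite (leq_trans le_c) ?leq_addr.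
by have := IHn i.+1; case: phase1 => o c' /= le_c'; rewrite mulSn leq_add.
Qed.

Lemma phase1_Some f i n j r c : (0 < i)%N -> phase1 f i n = (Some (j, r), c) ->
  [/\ (i <= j < i + n)%N, r != 0 & (size r <= 2 ^ j)%N].
Proof.
elim: n i c => [|n IHn] i c //= i_gt0.
have := size_modc f (binom2_neq0 i_gt0).
case: modc => r' c' /= size_r'; case: ifP => [r'0 [<- <-] _ | _].
  by rewrite leqnn addnS ltnS leq_addr r'0 -ltnS (leq_trans size_r') ?size_binom2.
have := IHn i.+1; case: phase1 => o c'' /= IH [def_o _]; subst o.
have [/andP[le_ij lt_j] r0 size_r] := IH c'' (ltn0Sn _) erefl.
by rewrite ltnW //= -addSnnS lt_j.
Qed.

Lemma phase2_cost ft s M : (forall g, g \in s -> ((modc ft g).2 <= M)%N) ->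
  ((phase2 ft s).2 <= M * (count (fun g => (g %| ft)%R) s).+1)%N.
Proof.
elim: s => [|g s IHs] //= le_M.
have := le_M g (mem_head _ _); have := @modc_eq0_dvdp ft g.
case: modc => r c /= dvd_g le_c; case: ifPn => [_ | /negPn/eqP r0].
  by rewrite (leq_trans le_c) ?leq_pmulr.
have := IHs (fun h s_h => le_M h (mem_behead (s := g :: s) s_h)).
by case: phase2 => o c' /= le_c'; rewrite dvd_g // add1n mulnS leq_add.
Qed.

Lemma F2_monic g : g != 0 -> g \is monic.
Proof.
by rewrite -lead_coef_eq0 monicE; case: (lead_coef g) => [[|[|m]] //= lt_m] _.
Qed.

(* A nonzero remainder of size at most 2^j has fewer than 2^j / j irreducible
   factors of degree j, which bounds the number of failed trial divisions. *)
Lemma phase2_cost_irredp ft s j : ft != 0 -> (0 < j)%N -> (size ft <= 2 ^ j)%N ->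
  uniq s -> (forall g, g \in s -> irreducible_poly g /\ size g = j.+1) ->
  ((phase2 ft s).2 <= 3 * (2 ^ j) ^ 2)%N.
Proof.
move=> ft0 j_gt0 size_ft uniq_s s_irr.
have le_c : forall g, g \in s -> ((modc ft g).2 <= 2 ^ j * j.+1)%N.
  move=> g /s_irr[_ size_g].
  by rewrite (leq_trans (modc_cost _ _)) // leq_mul // -size_g weight_le_size.
have le_kj : (count (fun g => (g %| ft)%R) s * j <= (2 ^ j).-1)%N.
  rewrite -size_filter (leq_trans (size_irredp_divisors ft0 (filter_uniq _ uniq_s) _)) //.
  - move=> g; rewrite mem_filter => /andP[dvd_g /s_irr[irr_g size_g]].
    by split=> //; apply/F2_monic/irredp_neq0.
  - by rewrite -!subn1 leq_sub2r.
have lt_j : (j < 2 ^ j)%N by rewrite ltn_expl.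
by apply: leq_trans (phase2_cost le_c) _; nia.
Qed.

Lemma expn_up_log_leq N : (1 < N)%N -> (2 ^ up_log 2 N <= 2 * N)%N.
Proof.
move=> N_gt1; have L_gt0 : (0 < up_log 2 N)%N by rewrite up_log_gt0 N_gt1.
rewrite -(prednK L_gt0) expnS leq_mul2l /= ltnW //; exact: up_log_gtn.
Qed.

Lemma procedure_cost L f irr B :
  (forall j ft, (phase1 f 1 L).1 = Some (j, ft) -> ((phase2 ft (irr j)).2 <= B)%N) ->
  ((procedure L f irr).2 <= (phase1 f 1 L).2 + B)%N.
Proof.
rewrite /procedure; case: phase1 => [[[j ft]|] c1] /= le_B; last exact: leq_addr.
by have := le_B j ft erefl; case: phase2 => o c2 /=; rewrite leq_add2l.
Qed.

Theorem proposition1 :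
  exists C : nat,
  forall (N h Lam : nat) (f : {poly F2}) (irr : nat -> seq {poly F2}),
    (2 <= N)%N -> (1 <= h)%N -> (1 <= Lam)%N ->
    f != 0 ->
    ((size f).-1 <= N * h * Lam * up_log 2 N)%N ->
    (forall j, uniq (irr j) /\
       (forall g : {poly F2}, g \in irr j <-> (irreducible_poly g /\ size g = j.+1))) ->
    (exists i : nat, [/\ (1 <= i)%N, (i <= up_log 2 N)%N & f %% binom2 i != 0]) ->
    ((procedure (up_log 2 N) f irr).2
       <= C * (N ^ 2 + h * N * (up_log 2 N) ^ 2 * Lam))%N.
Proof.
(* The bound holds whether or not phase 1 finds a nonzero remainder. *)
exists 14 => N h Lam f irr N_gt1 _ _ _ size_f irr_spec _.
set L := up_log 2 N.
have le_2L : (2 ^ L <= 2 * N)%N := expn_up_log_leq N_gt1.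
have le_2N : (2 * N <= N ^ 2)%N by rewrite expnS expn1 leq_mul2r N_gt1 orbT.
have le_L : (L <= N ^ 2)%N.
  by rewrite (leq_trans (ltnW (ltn_expl L (ltnSn 1)))) // (leq_trans le_2L).
have le_c1 : ((phase1 f 1 L).2 <= 2 * (h * N * L ^ 2 * Lam) + 2 * N ^ 2)%N.
  by rewrite (leq_trans (phase1_cost f 1 L)) //; nia.
have le_c2 j ft : (phase1 f 1 L).1 = Some (j, ft) -> ((phase2 ft (irr j)).2 <= 12 * N ^ 2)%N.
  case def_p1: phase1 => [o c1] /= def_o; subst o.
  have [/andP[j_gt0 lt_j] ft0 size_ft] := phase1_Some (ltn0Sn 0) def_p1.
  have [uniq_irr irr_j] := irr_spec j.
  have irr_js g : g \in irr j -> irreducible_poly g /\ size g = j.+1 by move/irr_j.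
  rewrite (leq_trans (phase2_cost_irredp ft0 j_gt0 size_ft uniq_irr irr_js)) //.
  have : (2 ^ j <= 2 * N)%N by rewrite (leq_trans _ le_2L) // leq_pexp2l.
  by nia.
by rewrite (leq_trans (procedure_cost le_c2)) //; lia.
Qed.
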